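(* Let $\mathcal{C}=(C_\varepsilon,D_{\varepsilon,\varepsilon'})_{\varepsilon\in\mathbb{E}_n}$ be a hypercube of chain complexes of finite-dimensional $\mathbb{C}$-vector spaces and $\mu$ a hypercube operator on $\mathcal{C}$. Suppose there is $\lambda\in\mathbb{C}$ such that for every $\varepsilon$, the map induced by $\mu_{\varepsilon,\varepsilon}$ on $H_*(C_\varepsilon,D_{\varepsilon,\varepsilon})$ has $\lambda$ as its only eigenvalue (i.e. its generalized $\lambda$-eigenspace is all of $H_*(C_\varepsilon)$). Then for every $r\in\mathbb{C}$ and every splitting map, the eigenspace hypercube $E^r(\mathcal{C},\mu)$ is homotopy equivalent (as a hypercube) to $\mathcal{C}$ if $r=\lambda$, and to the zero hypercube if $r\neq\lambda$.
   Context: $\mathbb{E}_n=\{0,1\}^n$ with coordinatewise order. A hypercube of chain complexes: spaces $C_\varepsilon$, maps $D_{\varepsilon,\varepsilon'}$ for $\varepsilon\le\varepsilon'$ whose total $D_{\mathrm{Tot}}$ squares to zero. A hypercube operator is a linear map $\mu$ of $\bigoplus C_\varepsilon$ preserving the filtration $C_{\ge\varepsilon}=\bigoplus_{\varepsilon'\ge\varepsilon}C_{\varepsilon'}$ and commuting with $D_{\mathrm{Tot}}$; $\mu_{\varepsilon,\varepsilon}$ is its component $C_\varepsilon\to C_\varepsilon$, a chain map. For $r\in\mathbb{C}$, $E^r(\mathcal{C},\mu)$ is the hypercube with vertex spaces $E^r_\varepsilon$ (generalized $r$-eigenspace of $\mu_{\varepsilon,\varepsilon}$ on $C_\varepsilon$)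 and total structure map $\Phi^{-1}D_{\mathrm{Tot}}\Phi$, where $\Phi\colon\bigoplus E^r_\varepsilon\to e^r$ is a splitting map into the generalized $r$-eigenspace $e^r$ of $\mu$ on the total space (a linear map sending $E^r_\varepsilon$ into $e^r\cap C_{\ge\varepsilon}$ and inducing the identity on $E^r_\varepsilon$ after projecting to $C_\varepsilon$). Homotopy equivalence of hypercubes means morphisms (collections of maps $F_{\varepsilon,\varepsilon'}$, $\varepsilon\le\varepsilon'$) in both directions that are cycles and whose composites are homotopic to the identities via such morphisms. *)

From HB Require Import structures.
From mathcomp Require Import all_boot all_order all_algebra.
From mathcomp Require Import complex reals.

Set Implicit Arguments.
Unset Strict Implicit.
Unset Printing Implicit Defensive.

Import GRing.Theory.
Local Open Scope ring_scope.

Definition cube (n : nat) := {ffun 'I_n -> bool}.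

Definition cle n (e e' : cube n) : bool := [forall i, e i ==> e' i].

Section Hyper.
Variables (K : fieldType) (n : nat).

Definition vfam := cube n -> vectType K.

(* A "collection of maps" F_{e,e'} : A_e -> B_{e'}; only the components
   with e <= e' are ever used (the others are irrelevant junk). *)
Definition hmaps (A B : vfam) := forall e e' : cube n, 'Hom(A e, B e').

Definition compH (A B C : vfam) (G : hmaps B C) (F : hmaps A B) : hmaps A C :=
  fun e e'' => \sum_(e' | cle e e' && cle e' e'') (G e' e'' \o F e e')%VF.

Definition is_hypercube (A : vfam) (D : hmaps A A) : Prop :=
  forall e e'', cle e e'' -> compH D D e e'' = 0.

Definition hcycle (A B : vfam) (DA : hmaps A A) (DB : hmaps B B)
  (F : hmaps A B) : Prop :=
  forall e e'', cle e e'' -> compH DB F e e'' = compH F DA e e''.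

Definition homotopic_id (A : vfam) (DA : hmaps A A) (P H : hmaps A A) : Prop :=
  (forall e, P e e = (\1%VF + compH DA H e e + compH H DA e e)) /\
  (forall e e'', cle e e'' -> e != e'' ->
     P e e'' = compH DA H e e'' + compH H DA e e'').

Definition hyper_htpy_equiv (A B : vfam) (DA : hmaps A A) (DB : hmaps B B)
  : Prop :=
  exists (F : hmaps A B) (G : hmaps B A) (HA : hmaps A A) (HB : hmaps B B),
    [/\ hcycle DA DB F, hcycle DB DA G,
        homotopic_id DA (compH G F) HA & homotopic_id DB (compH F G) HB].

(* Hypercube operator mu on (C, D): commutes with D_Tot (preservation of
   the filtration is built into the componentwise representation). *)
Definition hyper_operator (C : vfam) (D : hmaps C C) (mu : hmaps C C) : Prop :=
  forall e e'', cle e e'' -> compH mu D e e'' = compH D mu e e''.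

(* Application of a total map to an element of the total space
   (an element of the direct sum is a family x_e in C_e). *)
Definition totApp (A B : vfam) (F : hmaps A B) (x : forall e, A e) :
  forall e', B e' :=
  fun e' => \sum_(e | cle e e') F e e' (x e).

Definition in_tot_geig (C : vfam) (mu : hmaps C C) (r : K)
  (x : forall e, C e) : Prop :=
  exists N : nat, forall e,
    iter N (fun y : forall e, C e => fun e' => totApp mu y e' - r *: y e') x e
    = 0.

End Hyper.

Definition powsub (K : fieldType) (V : vectType K) (f : 'End(V)) (r : K)
  (N : nat) : 'End(V) :=
  iter N (fun g => ((f - r *: \1%VF) \o g)%VF) \1%VF.

Definition geig (K : fieldType) (V : vectType K) (f : 'End(V)) (r : K)
  : {vspace V} :=
  lker (powsub f r (\dim {:V})).

Definition Evtx (K : fieldType) n (C : vfam K n) (mu : hmaps C C) (r : K)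
  : vfam K n :=
  fun e => (subvs_of (geig (mu e e) r) : vectType K).

Definition splitting_map (K : fieldType) n (C : vfam K n) (mu : hmaps C C)
  (r : K) (Phi : hmaps (Evtx mu r) C) : Prop :=
  (forall e (v : Evtx mu r e),
     in_tot_geig mu r (fun e' => if cle e e' then Phi e e' v else 0)) /\
  (forall e (v : Evtx mu r e), Phi e e v = vsval v).

Definition zero_vtx (K : fieldType) n : vfam K n :=
  fun _ => ('rV[K]_0 : vectType K).
Definition zero_maps (K : fieldType) n : hmaps (@zero_vtx K n) (@zero_vtx K n)
  := fun _ _ => 0.

From HB Require Import structures.
From mathcomp Require Import all_boot all_order all_algebra.
From mathcomp Require Import complex reals.

(* The proof rests on a cone criterion: a cycle F : A -> B of hypercubes
   whose vertexwise mapping cones Cone(F_{e,e}) are acyclic is a homotopy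
   equivalence.  Indeed the total cone is a hypercube whose diagonal
   differentials are acyclic, hence contractible vertexwise; a vertexwise
   contraction h is perturbed into a total one, h (sum_k (1 - Dh - hD)^k),
   the series being finite because 1 - Dh - hD strictly raises the cube
   rank; the components of that contraction are a homotopy inverse of F
   and the two homotopies.

   By Fitting's lemma
   C_e = ker (mu_ee - r)^m (+) im (mu_ee - r)^m with both summands
   subcomplexes.  As mu_ee - lam is nilpotent on homology, the generalized
   r-eigenspace is acyclic for r <> lam, and for r = lam the image summand
   is acyclic, so the inclusion of the lam-eigenspace is a
   quasi-isomorphism.  Applying the cone criterion to the splitting map
   Phi (r = lam), resp. to the zero map into the zero hypercube (r <> lam),
   proves the theorem over any field; the statement over C = R[i] is the
   special case. *)

Set Implicit Arguments.
Unset Strict Implicit.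
Unset Printing Implicit Defensive.

Import GRing.Theory.
Local Open Scope ring_scope.

Section CubeOrder.
Variable n : nat.
Implicit Types e : cube n.

Lemma cle_refl e : cle e e.
Proof. by apply/forallP=> i; apply/implyP. Qed.

Lemma cle_trans e1 e2 e3 : cle e1 e2 -> cle e2 e3 -> cle e1 e3.
Proof.
move=> /forallP h12 /forallP h23; apply/forallP=> i; apply/implyP=> h1.
by move/implyP: (h23 i); apply; move/implyP: (h12 i); apply.
Qed.

Lemma cle_anti e1 e2 : cle e1 e2 -> cle e2 e1 -> e1 = e2.
Proof.
move=> /forallP h12 /forallP h21; apply/ffunP=> i.
by move: (h12 i) (h21 i); case: (e1 i); case: (e2 i).
Qed.

Definition cube_rank e : nat := #|[set i | e i]|.

Lemma cle_support e1 e2 : cle e1 e2 -> [set i | e1 i] \subset [set i | e2 i].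
Proof.
move=> /forallP h; apply/subsetP=> i; rewrite !inE => h1.
by move/implyP: (h i); apply.
Qed.

(* Strict monotonicity: this is what makes "raising the rank" nilpotent. *)
Lemma cle_rank_lt e1 e2 : cle e1 e2 -> e1 != e2 -> (cube_rank e1 < cube_rank e2)%N.
Proof.
move=> c12 ne; rewrite ltn_neqAle subset_leq_card ?cle_support // andbT.
apply: contra ne => /eqP eq_card; apply/eqP/cle_anti => //.
have [_] := subset_leqif_card (cle_support c12).
rewrite /cube_rank in eq_card; rewrite eq_card eqxx => /esym/subsetP sub21.
by apply/forallP=> i; apply/implyP=> h2; have := sub21 i; rewrite !inE; apply.
Qed.

Lemma cube_rank_max e : (cube_rank e <= n)%N.
Proof. by rewrite -[n]card_ord max_card. Qed.

End CubeOrder.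

(* components over comparable pairs e <= e' matter, so equality of maps    *)
(* is taken on those pairs (heq).                                          *)
Section HyperMaps.
Variables (K : fieldType) (n : nat).
Local Notation vfam := (vfam K n).
Implicit Types (A B C D : vfam).

Definition heq A B (F G : hmaps A B) : Prop :=
  forall e e', cle e e' -> F e e' = G e e'.
Definition addH A B (F G : hmaps A B) : hmaps A B := fun e e' => F e e' + G e e'.
Definition oppH A B (F : hmaps A B) : hmaps A B := fun e e' => - F e e'.
Definition zeroH A B : hmaps A B := fun _ _ => 0.

Lemma heq_refl A B (F : hmaps A B) : heq F F.
Proof. by []. Qed.

Lemma compHE A B C (G : hmaps B C) (F : hmaps A B) e e'' x :
  compH G F e e'' x = \sum_(e' | cle e e' && cle e' e'') G e' e'' (F e e' x).
Proof. by rewrite /compH sum_lfunE; apply: eq_bigr => *; rewrite comp_lfunE. Qed.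

Lemma compH_diag A B C (G : hmaps B C) (F : hmaps A B) e :
  compH G F e e = (G e e \o F e e)%VF.
Proof.
rewrite /compH (big_pred1 e) // => e'; apply/andP/eqP => [[h1 h2]|->].
  exact/esym/cle_anti.
by rewrite cle_refl.
Qed.

Lemma compH_resp A B C (G G' : hmaps B C) (F F' : hmaps A B) :
  heq G G' -> heq F F' -> heq (compH G F) (compH G' F').
Proof. by move=> hG hF e e'' _; apply: eq_bigr => e' /andP[h1 h2]; rewrite hG // hF. Qed.

Lemma compH_assoc A B C D (H : hmaps C D) (G : hmaps B C) (F : hmaps A B) e e3 :
  compH H (compH G F) e e3 = compH (compH H G) F e e3.
Proof.
apply/lfunP => x; rewrite !compHE.
under eq_bigr => e2 _ do rewrite compHE linear_sum.
rewrite (exchange_big_dep (fun e1 => cle e e1 && cle e1 e3)) /=; last first.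
  by move=> e2 e1 /andP[_ h23] /andP[-> h12]; rewrite (cle_trans h12 h23).
apply: eq_bigr => e1 /andP[h01 h13]; rewrite compHE; apply: eq_bigl => e2.
apply/andP/andP => [[/andP[_ ->] /andP[_ ->]] //|[h12 h23]].
by rewrite (cle_trans h01 h12) h23 h01 h12.
Qed.

Lemma compH_addl A B C (G1 G2 : hmaps B C) (F : hmaps A B) e e' :
  compH (addH G1 G2) F e e' = compH G1 F e e' + compH G2 F e e'.
Proof.
apply/lfunP => x; rewrite add_lfunE !compHE -big_split /=.
by apply: eq_bigr => *; rewrite add_lfunE.
Qed.

Lemma compH_addr A B C (G : hmaps B C) (F1 F2 : hmaps A B) e e' :
  compH G (addH F1 F2) e e' = compH G F1 e e' + compH G F2 e e'.
Proof.
apply/lfunP => x; rewrite add_lfunE !compHE -big_split /=.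
by apply: eq_bigr => *; rewrite add_lfunE linearD.
Qed.

Lemma compH_oppl A B C (G : hmaps B C) (F : hmaps A B) e e' :
  compH (oppH G) F e e' = - compH G F e e'.
Proof.
apply/lfunP => x; rewrite opp_lfunE !compHE -sumrN.
by apply: eq_bigr => *; rewrite opp_lfunE.
Qed.

Lemma compH_oppr A B C (G : hmaps B C) (F : hmaps A B) e e' :
  compH G (oppH F) e e' = - compH G F e e'.
Proof.
apply/lfunP => x; rewrite opp_lfunE !compHE -sumrN.
by apply: eq_bigr => *; rewrite opp_lfunE linearN.
Qed.

Lemma compH_0l A B C (F : hmaps A B) e e' : compH (zeroH B C) F e e' = 0.
Proof. by apply/lfunP => x; rewrite compHE zero_lfunE big1 // => *; rewrite zero_lfunE. Qed.

Lemma compH_0r A B C (G : hmaps B C) e e' : compH G (zeroH A B) e e' = 0.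
Proof.
apply/lfunP => x; rewrite compHE zero_lfunE big1 // => *.
by rewrite zero_lfunE linear0.
Qed.

Definition diagH A (h : forall e, 'End(A e)) : hmaps A A := fun e e' =>
  match e =P e' with
  | ReflectT p => eq_rect e (fun x => 'Hom(A e, A x)) (h e) e' p
  | ReflectF _ => 0
  end.

Lemma diagH_diag A (h : forall e, 'End(A e)) e : diagH h e e = h e.
Proof. by rewrite /diagH; case: eqP => // p; rewrite (eq_irrelevance p erefl). Qed.

Lemma diagH_off A (h : forall e, 'End(A e)) e e' : e != e' -> diagH h e e' = 0.
Proof. by rewrite /diagH; case: eqP. Qed.

Definition idH A : hmaps A A := diagH (fun e => \1%VF).

Lemma compH_idr A B (F : hmaps A B) : heq (compH F (idH A)) F.
Proof.
move=> e e'' c; rewrite /compH (bigD1 e) /=; last by rewrite cle_refl c.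
rewrite /idH diagH_diag comp_lfun1r big1 ?addr0 // => e' /andP[_ ne].
by rewrite diagH_off 1?eq_sym // comp_lfun0r.
Qed.

Lemma compH_idl A B (F : hmaps A B) : heq (compH (idH B) F) F.
Proof.
move=> e e'' c; rewrite /compH (bigD1 e'') /=; last by rewrite cle_refl c.
rewrite /idH diagH_diag comp_lfun1l big1 ?addr0 // => e' /andP[_ ne].
by rewrite diagH_off // comp_lfun0l.
Qed.

Definition raises_rank A B (a : nat) (F : hmaps A B) : Prop :=
  forall e e', cle e e' -> (cube_rank e' < cube_rank e + a)%N -> F e e' = 0.

Lemma raises_rank_comp A B C a b (G : hmaps B C) (F : hmaps A B) :
  raises_rank a F -> raises_rank b G -> raises_rank (a + b) (compH G F).
Proof.
move=> hF hG e e'' _ lt_rank; rewrite /compH big1 // => e' /andP[c1 c2].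
have [lt_a|ge_a] := ltnP (cube_rank e') (cube_rank e + a).
  by rewrite hF // comp_lfun0r.
rewrite hG ?comp_lfun0l //; apply: leq_trans lt_rank _.
by rewrite addnA leq_add2r.
Qed.

End HyperMaps.

(* as well.  With h0 the diagonal map h and M = D h0 + h0 D - 1, the error *)
(* M raises the rank, so the Neumann series V = sum_k (-M)^k is finite,    *)
(* and h0 V is a contraction of the total complex.                         *)
Section Perturbation.
Variables (K : fieldType) (n : nat) (A : vfam K n) (D : hmaps A A).
Hypothesis D_hyper : is_hypercube D.
Variable h : forall e, 'End(A e).
Hypothesis h_contr : forall e, ((D e e \o h e)%VF + (h e \o D e e)%VF) = \1%VF.

Local Notation h0 := (diagH h).
Local Notation U := (addH (compH D h0) (compH h0 D)).
Local Notation M := (addH U (oppH (idH A))).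

Let DD0 : heq (compH D D) (zeroH A A).
Proof. by move=> e e' c; rewrite D_hyper. Qed.

Let D_comm_U : heq (compH D U) (compH U D).
Proof.
move=> e e'' c; rewrite compH_addr compH_addl compH_assoc.
rewrite [compH D (compH h0 D) _ _]compH_assoc.
rewrite (compH_resp DD0 (heq_refl h0) c) compH_0l add0r.
rewrite -[compH (compH h0 D) D _ _]compH_assoc.
by rewrite (compH_resp (heq_refl h0) DD0 c) compH_0r addr0.
Qed.

Let D_comm_M : heq (compH D M) (compH M D).
Proof.
move=> e e'' c; rewrite compH_addr compH_addl compH_oppr compH_oppl.
by rewrite compH_idr // compH_idl // D_comm_U.
Qed.

(* The error term vanishes on the diagonal since h contracts each vertex. *)
Let M_raises : raises_rank 1 M.
Proof.
move=> e e' c; rewrite addn1 ltnS => le_rank.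
have <- : e = e'.
  by apply/eqP; apply: contraTT le_rank => ne; rewrite -ltnNge cle_rank_lt.
by rewrite /addH /oppH !compH_diag /idH !diagH_diag h_contr subrr.
Qed.

(* Partial sums V_k = sum_(j <= k) (-M)^j of the Neumann series. *)
Fixpoint neumann k : hmaps A A :=
  if k is k'.+1 then addH (idH A) (oppH (compH M (neumann k'))) else idH A.

Let D_comm_neumann k : heq (compH D (neumann k)) (compH (neumann k) D).
Proof.
elim: k => [|k IH] e e'' c /=; first by rewrite compH_idr // compH_idl.
rewrite compH_addr compH_addl compH_oppr compH_oppl compH_idr // compH_idl //.
rewrite compH_assoc (compH_resp D_comm_M (heq_refl _) c) -compH_assoc.
by rewrite (compH_resp (heq_refl _) IH c) compH_assoc.
Qed.

(* Consecutive partial sums differ by (-M)^(k+1), which raises rank k+1. *)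
Let neumann_step k : raises_rank k.+1 (addH (neumann k.+1) (oppH (neumann k))).
Proof.
elim: k => [|k IH] e e' c lt_rank.
  rewrite /= /addH /oppH compH_idr // addrAC subrr add0r.
  by have := M_raises c lt_rank; rewrite /addH /oppH => ->; rewrite oppr0.
have -> : addH (neumann k.+2) (oppH (neumann k.+1)) e e' =
          - compH M (addH (neumann k.+1) (oppH (neumann k))) e e'.
  rewrite compH_addr compH_oppr /= /addH /oppH.
  by rewrite opprB addrC addrA subrK opprD opprK addrC.
by rewrite (raises_rank_comp IH M_raises c) ?oppr0 // addn1.
Qed.

(* D (h0 V_n) + (h0 V_n) D = U V_n = V_n + M V_n = 1 - (V_(n+1) - V_n), and *)
(* V_(n+1) - V_n vanishes since no pair of vertices has rank gap n + 1.     *)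
Lemma perturbed_contraction :
  heq (addH (compH D (compH h0 (neumann n))) (compH (compH h0 (neumann n)) D))
      (idH A).
Proof.
move=> e e'' c; rewrite /addH [compH D _ _ _]compH_assoc.
rewrite -[compH (compH h0 (neumann n)) D _ _]compH_assoc.
rewrite -(compH_resp (heq_refl h0) (D_comm_neumann n) c) compH_assoc -compH_addl.
have -> : compH U (neumann n) e e'' = compH M (neumann n) e e'' + neumann n e e''.
  by rewrite [compH M _ _ _]compH_addl compH_oppl compH_idl // addrNK.
have -> : compH M (neumann n) e e'' = idH A e e'' - neumann n.+1 e e''.
  by rewrite /= /addH /oppH opprD opprK addNKr.
have := @neumann_step n _ _ c; rewrite /addH /oppH => step.
rewrite (subr0_eq (step _)) ?subrK //.
by rewrite addnS ltnS; apply: leq_trans (cube_rank_max e'') (leq_addl _ _).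
Qed.

End Perturbation.

Lemma hyper_contraction (K : fieldType) n (A : vfam K n) (D : hmaps A A)
    (h : forall e, 'End(A e)) :
  is_hypercube D -> (forall e, ((D e e \o h e)%VF + (h e \o D e e)%VF) = \1%VF) ->
  exists H : hmaps A A, heq (addH (compH D H) (compH H D)) (idH A).
Proof. by move=> hD hh; eexists; exact: (perturbed_contraction hD hh). Qed.

(* with g = d^-1 (a right inverse of d on its image), S = d g + g d is      *)
(* invertible and commutes with d, and g S^-1 is a contraction.             *)
Section AcyclicContraction.
Variables (K : fieldType) (V : vectType K) (d : 'End(V)).
Hypothesis dd : forall x, d (d x) = 0.
Hypothesis acyclic : forall x, d x = 0 -> exists y, x = d y.

Let S := ((d \o d^-1) + (d^-1 \o d))%VF.
Definition contraction : 'End(V) := (d^-1 \o S^-1)%VF.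

Let dgd x : d (d^-1%VF (d x)) = d x.
Proof. by rewrite limg_lfunVK // memv_img ?memvf. Qed.

Let dS : (d \o S = d)%VF.
Proof.
apply/lfunP => x; rewrite comp_lfunE add_lfunE !comp_lfunE linearD /=.
by rewrite dd add0r dgd.
Qed.

Let Sd : (S \o d = d)%VF.
Proof. by apply/lfunP => x; rewrite comp_lfunE add_lfunE !comp_lfunE dd linear0 addr0 dgd. Qed.

Let S_inj : lker S == 0%VS.
Proof.
apply/lker0P => x y eq_S; apply/eqP; rewrite -subr_eq0; apply/eqP.
have S0 : S (x - y) = 0 by rewrite linearB /= eq_S subrr.
have [w xy] : exists w, x - y = d w.
  by apply: acyclic; rewrite -dS comp_lfunE S0 linear0.
by move: S0; rewrite xy -(comp_lfunE S d) Sd.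
Qed.

Lemma contraction_spec : ((d \o contraction) + (contraction \o d))%VF = \1%VF.
Proof.
have SSV := lker0_compfV S_inj; have SVS := lker0_compVf S_inj.
have SVd : (S^-1 \o d = d \o S^-1)%VF.
  apply/lfunP => x; rewrite !comp_lfunE; apply: (lker0P S_inj).
  have SK y : S (S^-1%VF y) = y by rewrite -comp_lfunE SSV id_lfunE.
  by rewrite SK -{1}(SK x) -(comp_lfunE d S) dS -(comp_lfunE S d) Sd.
rewrite /contraction -!comp_lfunA SVd !comp_lfunA -comp_lfunDl.
by rewrite -/S SSV.
Qed.

End AcyclicContraction.

Definition lin_hom (K : fieldType) (aT rT : vectType K) (f : aT -> rT)
    (f_lin : linear f) : 'Hom(aT, rT) :=
  linfun (HB.pack f (GRing.isLinear.Build K aT rT *:%R f f_lin) : {linear aT -> rT}).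

Lemma lin_homE (K : fieldType) (aT rT : vectType K) (f : aT -> rT) (f_lin : linear f) x :
  lin_hom f_lin x = f x.
Proof. by rewrite /lin_hom lfunE. Qed.

Section Injections.
Variables (K : fieldType) (U W : vectType K).

Lemma inl_lin : linear (fun x : U => ((x, 0) : (U * W)%type)).
Proof. by move=> a u v; apply: injective_projections; rewrite /= ?scaler0 ?addr0. Qed.

Lemma inr_lin : linear (fun y : W => ((0, y) : (U * W)%type)).
Proof. by move=> a u v; apply: injective_projections; rewrite /= ?scaler0 ?addr0. Qed.

Definition inl_hom : 'Hom(U, (U * W)%type) := lin_hom inl_lin.
Definition inr_hom : 'Hom(W, (U * W)%type) := lin_hom inr_lin.

End Injections.

(* Vertexwise acyclicity of the mapping cone of F: every cycle (x, y) of    *)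
(* Cone(F_{e,e}), i.e. D x = 0 and F x + D y = 0, is a boundary.            *)
Definition cone_acyclic (K : fieldType) n (A B : vfam K n)
    (DA : hmaps A A) (DB : hmaps B B) (F : hmaps A B) : Prop :=
  forall e x y, DA e e x = 0 -> F e e x + DB e e y = 0 ->
    exists a b, x = - DA e e a /\ y = F e e a + DB e e b.

Lemma hyper_diag_dd (K : fieldType) n (A : vfam K n) (D : hmaps A A) :
  is_hypercube D -> forall e x, D e e (D e e x) = 0.
Proof. by move=> hD e x; rewrite -comp_lfunE -compH_diag hD ?cle_refl // zero_lfunE. Qed.

Section Cone.
Variables (K : fieldType) (n : nat) (A B : vfam K n).
Variables (DA : hmaps A A) (DB : hmaps B B) (F : hmaps A B).
Hypothesis DA_hyper : is_hypercube DA.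
Hypothesis DB_hyper : is_hypercube DB.
Hypothesis F_cycle : hcycle DA DB F.

Definition coneV : vfam K n := fun e => ((A e * B e)%type : vectType K).

Let cone_lin e e' :
  linear (fun p : coneV e => ((- DA e e' p.1, F e e' p.1 + DB e e' p.2) : coneV e')).
Proof.
move=> a u v; rewrite /= !linearD !linearZ /=.
by congr pair; rewrite /= scalerDr addrACA.
Qed.

Definition coneD : hmaps coneV coneV := fun e e' => lin_hom (@cone_lin e e').

Lemma coneDE e e' p : coneD e e' p = (- DA e e' p.1, F e e' p.1 + DB e e' p.2).
Proof. exact: lin_homE. Qed.

Lemma cone_hyper : is_hypercube coneD.
Proof.
move=> e e'' c; apply/lfunP => p; rewrite compHE zero_lfunE.
apply: injective_projections; rewrite !raddf_sum /=.
  under eq_bigr => e' _ do rewrite !coneDE /= linearN opprK.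
  by rewrite -compHE DA_hyper // zero_lfunE.
under eq_bigr => e' _ do rewrite !coneDE /= linearN linearD addrA.
rewrite !big_split /= sumrN -!compHE DB_hyper // zero_lfunE addr0 F_cycle //.
by rewrite addNr.
Qed.

Section FromContraction.
Variable H : hmaps coneV coneV.
Hypothesis H_contr : heq (addH (compH coneD H) (compH H coneD)) (idH coneV).

Let G : hmaps B A := fun e e' => (linfun fst \o H e e' \o inr_hom _ _)%VF.
Let HA : hmaps A A := fun e e' => (linfun fst \o H e e' \o inl_hom _ _)%VF.
Let HB : hmaps B B := fun e e' => (- (linfun snd \o H e e' \o inr_hom _ _))%VF.

Let GE e e' y : G e e' y = (H e e' (0, y)).1.
Proof. by rewrite !comp_lfunE lfunE lin_homE. Qed.
Let HAE e e' x : HA e e' x = (H e e' (x, 0)).1.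
Proof. by rewrite !comp_lfunE lfunE lin_homE. Qed.
Let HBE e e' y : HB e e' y = - (H e e' (0, y)).2.
Proof. by rewrite opp_lfunE !comp_lfunE lfunE lin_homE. Qed.

Let H_split e e' (u : A e) (v : B e) :
  H e e' (u, v) = H e e' (u, 0) + H e e' (0, v).
Proof.
rewrite -linearD; congr (H e e' _).
by apply: injective_projections; rewrite /= ?addr0 ?add0r.
Qed.

Let H_contrE e e'' p : cle e e'' ->
  \sum_(e' | cle e e' && cle e' e'') coneD e' e'' (H e e' p) +
  \sum_(e' | cle e e' && cle e' e'') H e' e'' (coneD e e' p) = idH coneV e e'' p.
Proof. by move=> c; have /lfunP/(_ p) := H_contr c; rewrite add_lfunE !compHE. Qed.

Let idH_fst e e'' p : (idH coneV e e'' p).1 = idH A e e'' p.1.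
Proof.
by have [<-|ne] := eqVneq e e''; rewrite /idH ?diagH_diag ?id_lfunE ?diagH_off ?zero_lfunE.
Qed.

Let idH_snd e e'' p : (idH coneV e e'' p).2 = idH B e e'' p.2.
Proof.
by have [<-|ne] := eqVneq e e''; rewrite /idH ?diagH_diag ?id_lfunE ?diagH_off ?zero_lfunE.
Qed.

Let G_cycle : hcycle DB DA G.
Proof.
move=> e e'' c; apply/lfunP => y; rewrite !compHE.
have := congr1 fst (H_contrE (0, y) c); rewrite idH_fst /= linear0 !raddf_sum /=.
under eq_bigr => e' _ do rewrite coneDE -GE.
under [X in _ + X]eq_bigr => e' _ do rewrite coneDE /= linear0 oppr0 linear0 add0r -GE.
by rewrite sumrN => /eqP; rewrite addrC subr_eq0 => /eqP.
Qed.

Let GF_homotopy e e'' : cle e e'' ->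
  compH G F e e'' = idH A e e'' + compH DA HA e e'' + compH HA DA e e''.
Proof.
move=> c; apply/lfunP => x; rewrite !add_lfunE !compHE.
have := congr1 fst (H_contrE (x, 0) c); rewrite idH_fst /= !raddf_sum /=.
under eq_bigr => e' _ do rewrite coneDE /= -HAE.
under [X in _ + X]eq_bigr => e' _ do
  rewrite coneDE /= linear0 addr0 H_split /= -HAE -GE linearN.
rewrite big_split /= !sumrN => <-.
by rewrite (addrC (- _)) subrK (addrC (- _)) subrK.
Qed.

Let FG_homotopy e e'' : cle e e'' ->
  compH F G e e'' = idH B e e'' + compH DB HB e e'' + compH HB DB e e''.
Proof.
move=> c; apply/lfunP => y; rewrite !add_lfunE !compHE.
have := congr1 snd (H_contrE (0, y) c); rewrite idH_snd /= !raddf_sum /=.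
under eq_bigr => e' _ do
  rewrite coneDE /= -GE -[(H _ _ (0, _)).2]opprK -HBE linearN.
under [X in _ + X]eq_bigr => e' _ do
  rewrite coneDE /= linear0 oppr0 linear0 add0r -[(H _ _ (0, _)).2]opprK -HBE.
rewrite big_split /= !sumrN => <-.
by rewrite addrAC !subrK.
Qed.

Lemma htpy_equiv_of_cone_contraction : hyper_htpy_equiv DA DB.
Proof.
exists F, G, HA, HB; split; [exact: F_cycle | exact: G_cycle | |].
- split=> [e|e e'' c ne]; first by rewrite GF_homotopy ?cle_refl // /idH diagH_diag.
  by rewrite GF_homotopy // /idH diagH_off // add0r.
- split=> [e|e e'' c ne]; first by rewrite FG_homotopy ?cle_refl // /idH diagH_diag.
  by rewrite FG_homotopy // /idH diagH_off // add0r.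
Qed.

End FromContraction.

Hypothesis F_cone_acyclic : cone_acyclic DA DB F.

Let cone_dd e p : coneD e e (coneD e e p) = 0.
Proof. exact: hyper_diag_dd cone_hyper e p. Qed.

Let cone_acyc e p : coneD e e p = 0 -> exists q, p = coneD e e q.
Proof.
case: p => x y; rewrite coneDE /= => /eqP.
rewrite xpair_eqE oppr_eq0 => /andP[/eqP Dx0 /eqP cyc].
by have [a [b [-> ->]]] := F_cone_acyclic Dx0 cyc; exists (a, b); rewrite coneDE.
Qed.

Theorem cone_criterion : hyper_htpy_equiv DA DB.
Proof.
have [H H_contr] := hyper_contraction cone_hyper
  (fun e => contraction_spec (@cone_dd e) (@cone_acyc e)).
exact: htpy_equiv_of_cone_contraction H_contr.
Qed.

End Cone.

Section Fitting.
Variables (K : fieldType) (V : vectType K).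

Definition tpow (t : 'End(V)) k : 'End(V) := iter k (fun g => (t \o g)%VF) \1%VF.

Lemma tpow0 t x : tpow t 0 x = x.
Proof. by rewrite /tpow /= id_lfunE. Qed.

Lemma tpowS t k x : tpow t k.+1 x = t (tpow t k x).
Proof. by rewrite /tpow iterS comp_lfunE. Qed.

Lemma tpowD t a b x : tpow t (a + b) x = tpow t a (tpow t b x).
Proof. by elim: a => [|a IH]; rewrite ?add0n ?tpow0 // addSn !tpowS IH. Qed.

Lemma tpowSr t k x : tpow t k.+1 x = tpow t k (t x).
Proof. by rewrite -addn1 tpowD tpowS tpow0. Qed.

Lemma tpow_comm (t s : 'End(V)) k x :
  (forall y, t (s y) = s (t y)) -> tpow t k (s x) = s (tpow t k x).
Proof. by move=> ts; elim: k => [|k IH]; rewrite ?tpow0 // !tpowS IH ts. Qed.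

Local Notation m := (\dim {:V}).
Variable t : 'End(V).

Lemma lker_tpow_mono a b : (a <= b)%N -> (lker (tpow t a) <= lker (tpow t b))%VS.
Proof.
move=> le_ab; apply/subvP => x; rewrite !memv_ker => /eqP ta0.
by rewrite -(subnK le_ab) tpowD ta0 linear0.
Qed.

Lemma lker_tpow_const i j :
  lker (tpow t i) = lker (tpow t i.+1) -> lker (tpow t (i + j)) = lker (tpow t i).
Proof.
move=> eq_i; elim: j => [|j IH]; first by rewrite addn0.
apply/subv_anti/andP; split; last by rewrite -IH lker_tpow_mono ?leq_add2l.
apply/subvP => x; rewrite memv_ker => /eqP x0.
have /eqP tjx0 : tpow t i (tpow t j x) == 0.
  by rewrite -memv_ker eq_i memv_ker -tpowD addSn -addnS x0.
by rewrite -IH memv_ker tpowD tjx0.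
Qed.

(* A strictly increasing chain of kernels gains a dimension at each step, *)
(* so two consecutive kernels agree at some step i <= m.                   *)
Lemma lker_tpow_stable_step :
  exists2 i, (i <= m)%N & lker (tpow t i) = lker (tpow t i.+1).
Proof.
have [/existsP[i /eqP eq_i]|/existsPn strict] :=
  boolP [exists i : 'I_m.+1, lker (tpow t i) == lker (tpow t i.+1)].
  by exists i; first exact: ltn_ord i.
have grow j : (j <= m.+1)%N -> (j <= \dim (lker (tpow t j)))%N.
  elim: j => // j IH lt_j; apply: leq_ltn_trans (IH (ltnW lt_j)) _.
  rewrite ltn_neqAle dimvS ?lker_tpow_mono // andbT.
  apply: contra (strict (Ordinal lt_j)) => /eqP eq_dim.
  by rewrite eqEdim lker_tpow_mono //= eq_dim.
by have := leq_trans (grow _ (leqnn _)) (dimvS (subvf _)); rewrite ltnn.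
Qed.

Lemma lker_tpow_stab k : lker (tpow t (m + k)) = lker (tpow t m).
Proof.
have [i le_im eq_i] := lker_tpow_stable_step.
by rewrite -(subnKC le_im) -addnA !lker_tpow_const.
Qed.

Local Notation Ks := (lker (tpow t m)).
Local Notation Ws := (limg (tpow t m)).

Lemma fitting_cap : (Ks :&: Ws = 0)%VS.
Proof.
apply/eqP; rewrite -subv0; apply/subvP => x /memv_capP[xK /memv_imgP[y _ xy]].
move: xK; rewrite xy memv_ker -tpowD => yK.
have : y \in lker (tpow t (m + m)) by rewrite memv_ker.
by rewrite lker_tpow_stab memv_ker memv0.
Qed.

Lemma fitting_sum : (Ks + Ws = fullv)%VS.
Proof.
apply/eqP; rewrite eqEdim subvf /=.
have := dimv_sum_cap Ks Ws; rewrite fitting_cap dimv0 addn0 => ->.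
by have := limg_ker_dim (tpow t m) fullv; rewrite capfv => ->.
Qed.

End Fitting.

(* q is bijective on S, a cycle x = q x' of S has q x' = d z, and the      *)
(* S-component of z is a primitive of x inside S.                          *)
Section AcyclicSummand.
Variables (K : fieldType) (V : vectType K) (d q : 'End(V)) (S T : {vspace V}).
Hypothesis capST : (S :&: T = 0)%VS.
Hypothesis sumST : (S + T = fullv)%VS.
Hypothesis dS : forall x, x \in S -> d x \in S.
Hypothesis dT : forall x, x \in T -> d x \in T.
Hypothesis qS : forall x, x \in S -> q x \in S.
Hypothesis q_inj : forall x, x \in S -> q x = 0 -> x = 0.
Hypothesis qd : forall x, q (d x) = d (q x).
Hypothesis q_homology0 : forall x, d x = 0 -> q x \in limg d.

Lemma cap_summands0 x : x \in S -> x \in T -> x = 0.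
Proof. by move=> xS xT; apply/eqP; rewrite -memv0 -capST; apply/memv_capP. Qed.

Lemma acyclic_summand x : x \in S -> d x = 0 -> exists2 y, y \in S & x = d y.
Proof.
move=> xS dx0.
have qSS : (q @: S)%VS = S.
  apply/eqP; rewrite eqEdim; apply/andP; split.
    by apply/subvP => z /memv_imgP[u uS ->]; apply: qS.
  rewrite limg_dim_eq //; apply/eqP; rewrite -subv0.
  by apply/subvP => z /memv_capP[zS]; rewrite memv_ker memv0 => /eqP/(q_inj zS) ->.
move: xS; rewrite -{1}qSS => /memv_imgP[x' x'S xq]; rewrite xq in dx0 *.
have dx'0 : d x' = 0 by apply: q_inj; [exact: dS | rewrite qd].
have /memv_imgP[z _ qx'] := q_homology0 dx'0.
have : z \in (S + T)%VS by rewrite sumST memvf.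
case/memv_addP => k kS [w wT zkw]; exists k => //.
have dw0 : d w = 0.
  apply: cap_summands0; last exact: dT.
  have -> : d w = q x' - d k by rewrite qx' zkw linearD addrC addKr.
  by rewrite memvB ?qS ?dS.
by rewrite qx' zkw linearD /= dw0 addr0.
Qed.

End AcyclicSummand.

Section VertexEigenspaces.
Variables (K : fieldType) (V : vectType K) (f d : 'End(V)) (lam : K) (N : nat).
Hypothesis fd : forall x, f (d x) = d (f x).
Hypothesis f_homology : forall x, x \in lker d -> powsub f lam N x \in limg d.

Local Notation m := (\dim {:V}).
Local Notation sub r := (f - r *: \1)%VF.

Let subE r x : sub r x = f x - r *: x.
Proof. by rewrite add_lfunE opp_lfunE scale_lfunE id_lfunE. Qed.

Let sub_d r x : sub r (d x) = d (sub r x).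
Proof. by rewrite !subE fd -linearZ -linearB. Qed.

Let sub_comm r s x : sub r (sub s x) = sub s (sub r x).
Proof.
rewrite !subE !raddfB /= !linearZ /= !scalerA mulrC -!addrA.
by rewrite (addrCA (s *: - f x)).
Qed.

Let pow_d r k x : tpow (sub r) k (d x) = d (tpow (sub r) k x).
Proof. by apply: tpow_comm => y; rewrite sub_d. Qed.

Let pow_comm r s k j x :
  tpow (sub r) k (tpow (sub s) j x) = tpow (sub s) j (tpow (sub r) k x).
Proof. by apply: tpow_comm => y; apply/esym/tpow_comm => z; exact: sub_comm. Qed.

Let d_ker r x : x \in lker (tpow (sub r) m) -> d x \in lker (tpow (sub r) m).
Proof. by rewrite !memv_ker pow_d => /eqP ->; rewrite linear0. Qed.

Let d_img r x : x \in limg (tpow (sub r) m) -> d x \in limg (tpow (sub r) m).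
Proof. by case/memv_imgP => y _ ->; rewrite -pow_d memv_img ?memvf. Qed.

Let pow_ker r s j x :
  x \in lker (tpow (sub r) m) -> tpow (sub s) j x \in lker (tpow (sub r) m).
Proof. by rewrite !memv_ker pow_comm => /eqP ->; rewrite linear0. Qed.

Let pow_img r s j x :
  x \in limg (tpow (sub r) m) -> tpow (sub s) j x \in limg (tpow (sub r) m).
Proof. by case/memv_imgP => y _ ->; rewrite pow_comm memv_img ?memvf. Qed.

Let eigvec_pow r x k : f x = lam *: x -> tpow (sub r) k x = (lam - r) ^+ k *: x.
Proof.
move=> fx; elim: k => [|k IH]; first by rewrite tpow0 expr0 scale1r.
by rewrite tpowS IH linearZ /= subE fx -scalerBl scalerA exprS mulrC.
Qed.

Let sub_lam_inj r x : r != lam ->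
  x \in lker (tpow (sub r) m) -> sub lam x = 0 -> x = 0.
Proof.
move=> ne_r xK x0; have fx : f x = lam *: x by apply/eqP; rewrite -subr_eq0 -subE x0.
move: xK; rewrite memv_ker eigvec_pow // scaler_eq0 expf_eq0 subr_eq0 eq_sym.
by rewrite (negbTE ne_r) andbF => /eqP.
Qed.

Lemma geig_acyclic r x : r != lam -> x \in geig f r -> d x = 0 ->
  exists2 y, y \in geig f r & x = d y.
Proof.
move=> ne_r; apply: (@acyclic_summand _ _ d (tpow (sub lam) N) _ (limg (tpow (sub r) m))).
- exact: fitting_cap.
- exact: fitting_sum.
- exact: d_ker.
- exact: d_img.
- exact: pow_ker.
- elim: N => [|k IH] y yK; first by rewrite tpow0.
  rewrite tpowSr => /IH sub0; apply: (sub_lam_inj ne_r yK); apply: sub0.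
  by have := pow_ker lam 1 yK; rewrite tpowS tpow0.
- by move=> y; rewrite pow_d.
- by move=> y dy0; apply: f_homology; rewrite memv_ker dy0.
Qed.

(* The image summand im (f - lam)^m is acyclic: (f - lam)^N is injective   *)
(* there since ker (f - lam)^N lies in the complementary kernel summand.   *)
Lemma fitting_image_acyclic x : x \in limg (tpow (sub lam) m) -> d x = 0 ->
  exists2 y, y \in limg (tpow (sub lam) m) & x = d y.
Proof.
apply: (@acyclic_summand _ _ d (tpow (sub lam) N) _ (lker (tpow (sub lam) m))).
- by rewrite capvC; exact: fitting_cap.
- by rewrite addvC; exact: fitting_sum.
- exact: d_img.
- exact: d_ker.
- exact: pow_img.
- move=> y yW y0; apply: (cap_summands0 (fitting_cap (sub lam))) => //.
  rewrite -(lker_tpow_stab _ N) addnC.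
  by apply: (subvP (lker_tpow_mono _ (leq_addr m N))); rewrite memv_ker y0.
- by move=> y; rewrite pow_d.
- by move=> y dy0; apply: f_homology; rewrite memv_ker dy0.
Qed.

(* Hence the inclusion of the generalized lam-eigenspace is a             *)
(* quasi-isomorphism: every cycle (x, y) of its mapping cone is a boundary. *)
Lemma geig_inclusion_cone_acyclic x y : x \in geig f lam -> x + d y = 0 ->
  exists2 a, a \in geig f lam & exists b, x = - d a /\ y = a + d b.
Proof.
move=> xK cyc.
have : y \in (lker (tpow (sub lam) m) + limg (tpow (sub lam) m))%VS.
  by rewrite fitting_sum memvf.
case/memv_addP => k kK [w wW ykw].
have dw0 : d w = 0.
  apply: (cap_summands0 (fitting_cap (sub lam))); last exact: d_img.
  have -> : d w = - (x + d k).
    by apply/eqP; rewrite -addr_eq0 addrC -addrA -linearD -ykw cyc.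
  by rewrite memvN memvD ?d_ker.
have dyk : d y = d k by rewrite ykw linearD /= dw0 addr0.
have [w' _ ww'] := fitting_image_acyclic wW dw0.
exists k => //; exists w'; split; last by rewrite ykw ww'.
by apply/eqP; rewrite -addr_eq0 -dyk cyc.
Qed.

End VertexEigenspaces.

Lemma compH_injl (K : fieldType) n (A B C : vfam K n) (P : hmaps A B) (X : hmaps C A) :
  (forall e, injective (P e e)) -> heq (compH P X) (zeroH C B) -> heq X (zeroH C A).
Proof.
move=> P_inj PX0 e.
suff X0 k e'' : (cube_rank e'' < k)%N -> cle e e'' -> X e e'' = 0.
  by move=> e'' c; apply: (X0 (cube_rank e'').+1).
elim: k e'' => [//|k IH] e'' lt_k c.
have := PX0 e e'' c; rewrite /compH (bigD1 e'') /=; last by rewrite c cle_refl.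
rewrite big1 ?addr0 => [PX|e' /andP[/andP[c1 c2] ne]]; last first.
  rewrite IH ?comp_lfun0r //.
  by apply: leq_trans (cle_rank_lt c2 ne) _; rewrite -ltnS.
apply/lfunP => x; rewrite zero_lfunE; apply: (P_inj e'').
by rewrite -comp_lfunE PX !zero_lfunE linear0.
Qed.

Lemma hypercube_pullback (K : fieldType) n (A C : vfam K n) (Phi : hmaps A C)
    (D : hmaps C C) (DE : hmaps A A) :
  (forall e, injective (Phi e e)) -> is_hypercube D ->
  heq (compH Phi DE) (compH D Phi) -> is_hypercube DE.
Proof.
move=> Phi_inj D_hyper Phi_DE.
have DD0 : heq (compH D D) (zeroH C C) by move=> e e' c; rewrite D_hyper.
suff : heq (compH DE DE) (zeroH A A) by move=> DEDE0 e e' c; rewrite DEDE0.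
apply: (compH_injl Phi_inj) => e e'' c.
rewrite compH_assoc (compH_resp Phi_DE (heq_refl DE) c) -compH_assoc.
rewrite (compH_resp (heq_refl D) Phi_DE c) compH_assoc.
by rewrite (compH_resp DD0 (heq_refl Phi) c) compH_0l.
Qed.

Section EigenspaceHypercube.
Variables (K : fieldType) (n : nat) (C : vfam K n) (D mu : hmaps C C) (lam r : K).
Hypothesis D_hyper : is_hypercube D.
Hypothesis mu_op : hyper_operator D mu.
Hypothesis mu_homology : forall e : cube n, exists N : nat, forall x : C e,
  x \in lker (D e e) -> powsub (mu e e) lam N x \in limg (D e e).
Variables (Phi : hmaps (Evtx mu r) C) (DE : hmaps (Evtx mu r) (Evtx mu r)).
Hypothesis Phi_split : splitting_map Phi.
Hypothesis Phi_DE : heq (compH Phi DE) (compH D Phi).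

Let Phi_diag e v : Phi e e v = vsval v.
Proof. by case: Phi_split => _ ->. Qed.

Let Phi_inj e : injective (Phi e e).
Proof. by move=> u v; rewrite !Phi_diag => /val_inj. Qed.

Let DE_diag e v : vsval (DE e e v) = D e e (vsval v).
Proof.
have /lfunP/(_ v) := Phi_DE (cle_refl e).
by rewrite !compH_diag !comp_lfunE !Phi_diag.
Qed.

Let mu_D e x : mu e e (D e e x) = D e e (mu e e x).
Proof.
have /lfunP/(_ x) := mu_op (cle_refl e).
by rewrite !compH_diag !comp_lfunE.
Qed.

Let DE_hyper : is_hypercube DE.
Proof. exact: hypercube_pullback Phi_inj D_hyper Phi_DE. Qed.

Lemma eigenspace_equiv_same : r = lam -> hyper_htpy_equiv DE D.
Proof.
move=> r_lam; subst r; apply: (cone_criterion DE_hyper D_hyper (F := Phi)).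
  by move=> e e'' c; rewrite Phi_DE.
move=> e x y _ cyc; have [N hN] := mu_homology e.
rewrite Phi_diag in cyc.
have [a aK [b [xa yab]]] :=
  geig_inclusion_cone_acyclic (@mu_D e) hN (subvsP x) cyc.
exists (Subvs aK), b; split; last by rewrite Phi_diag.
by apply: Phi_inj; rewrite linearN /= !Phi_diag DE_diag.
Qed.

Lemma eigenspace_equiv_other : r <> lam -> hyper_htpy_equiv DE (@zero_maps K n).
Proof.
move=> /eqP ne_r; apply: (cone_criterion DE_hyper (F := zeroH _ _)).
- by move=> e e'' c; exact: compH_0r.
- by move=> e e'' c; rewrite compH_0l compH_0r.
move=> e x y DEx0 _; have [N hN] := mu_homology e.
have Dx0 : D e e (vsval x) = 0 by rewrite -DE_diag DEx0.
have [a aK xa] :=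
  geig_acyclic (@mu_D e) hN ne_r (subvsP x) Dx0.
exists (- Subvs aK), 0; split; last by rewrite !zero_lfunE addr0; apply: thinmx0.
by rewrite linearN opprK; apply: Phi_inj; rewrite /= !Phi_diag DE_diag.
Qed.

End EigenspaceHypercube.

Theorem eigenspace_hypercube_equiv (K : fieldType) (n : nat)
    (C : vfam K n) (D mu : hmaps C C) (lam : K) :
  is_hypercube D -> hyper_operator D mu ->
  (forall e : cube n, exists N : nat, forall x : C e,
     x \in lker (D e e) -> powsub (mu e e) lam N x \in limg (D e e)) ->
  forall (r : K) (Phi : hmaps (Evtx mu r) C) (DE : hmaps (Evtx mu r) (Evtx mu r)),
    splitting_map Phi ->
    (forall e e'', cle e e'' -> compH Phi DE e e'' = compH D Phi e e'') ->
    (r = lam -> hyper_htpy_equiv DE D) /\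
    (r <> lam -> hyper_htpy_equiv DE (@zero_maps K n)).
Proof.
move=> D_hyper mu_op mu_homology r Phi DE Phi_split Phi_DE; split.
- exact: (eigenspace_equiv_same D_hyper mu_op mu_homology Phi_split Phi_DE).
- exact: (eigenspace_equiv_other D_hyper mu_op mu_homology Phi_split Phi_DE).
Qed.

Theorem mainTheorem13 (R : realType) (n : nat)
  (C : vfam R[i] n) (D : hmaps C C) (mu : hmaps C C) (lam : R[i]) :
  is_hypercube D ->
  hyper_operator D mu ->
  (forall e : cube n, exists N : nat, forall x : C e,
     x \in lker (D e e) -> powsub (mu e e) lam N x \in limg (D e e)) ->
  forall (r : R[i]) (Phi : hmaps (Evtx mu r) C)
         (DE : hmaps (Evtx mu r) (Evtx mu r)),
    splitting_map Phi ->
    (forall e e'', cle e e'' -> compH Phi DE e e'' = compH D Phi e e'') ->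
    (r = lam -> hyper_htpy_equiv DE D) /\
    (r <> lam -> hyper_htpy_equiv DE (@zero_maps R[i] n)).
Proof. exact: eigenspace_hypercube_equiv. Qed.
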